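(* Let $W\in\mathbb{D}_n$ be a Dale matrix with excitatory neurons $\mathcal{E}$ and inhibitory neurons $\mathcal{I}$, satisfying the Ground Assumption, and let $W'\in\mathbb{D}_n$ (same partition) be defined by $W'_{ij}=0$ for all $i\in\mathcal{I}$, $j\in\mathcal{E}$, and $W'_{ij}=W_{ij}$ otherwise. Then $\mathcal{C}(W)=\mathcal{C}(W')$.
   Context: Threshold-linear network: for $W\in\mathbb{R}^{n\times n}$ and $b\in\mathbb{R}^n$, the dynamics are $\dot x_i=-x_i+[\sum_{j=1}^n W_{ij}x_j+b_i]_+$, where $[y]_+=\max(0,y)$. A fixed point is $x^*\in\mathbb{R}^n$ with $x^*=[Wx^*+b]_+$. A Dale matrix $W\in\mathbb{D}_n$ is an $n\times n$ real matrix with a partition $[n]=\mathcal{E}\sqcup\mathcal{I}$ (excitatory/inhibitory) such that $W_{ii}=0$, $W_{ji}\ge0$ for all $j$ when $i\in\mathcal{E}$, and $W_{ji}\le0$ for all $j$ when $i\in\mathcal{I}$. Ground Assumption: for every nonempty $\sigma\subset[n]$, the principal submatrix $(I-W)_\sigma$ is nonsingular. Excitatory support: $\mathrm{supp}_+x=\{i\in\mathcal{E}:x_i>0\}$. Combinatorial code: $\mathcal{C}(W)=\{\mathrm{supp}_+x^*: b\in\mathbb{R}^n_{\ge0},\ x^*\in\mathbb{R}^n_{\ge0}\text{ a fixed point of }(W,b)\}$. *)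

From mathcomp Require Import all_boot all_order all_algebra.
Set Implicit Arguments. Unset Strict Implicit. Unset Printing Implicit Defensive.
Import Order.TTheory GRing.Theory Num.Theory.
Local Open Scope ring_scope.

(* Neurons are indexed by 'I_n; E : {set 'I_n} is the excitatory set,
   the inhibitory set is its complement ~: E. *)

Definition dale (R : realFieldType) (n : nat) (W : 'M[R]_n) (E : {set 'I_n}) : Prop :=
  (forall i, W i i = 0) /\
  (forall i j, i \in E -> 0 <= W j i) /\
  (forall i j, i \notin E -> W j i <= 0).

Definition principal_submx (R : pzRingType) (n : nat) (A : 'M[R]_n) (sigma : {set 'I_n})
  : 'M[R]_#|sigma| :=
  \matrix_(i, j) A (enum_val i) (enum_val j).

Definition ground_assumption (R : realFieldType) (n : nat) (W : 'M[R]_n) : Prop :=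
  forall sigma : {set 'I_n}, sigma != set0 ->
    principal_submx (1%:M - W) sigma \in unitmx.

Definition relu (R : realFieldType) (y : R) : R := Num.max 0 y.

Definition tln_fixed_point (R : realFieldType) (n : nat) (W : 'M[R]_n) (b x : 'cV[R]_n) : Prop :=
  forall i, x i 0 = relu ((W *m x) i 0 + b i 0).

Definition supp_plus (R : realFieldType) (n : nat) (E : {set 'I_n}) (x : 'cV[R]_n) : {set 'I_n} :=
  [set i in E | 0 < x i 0].

Definition comb_code (R : realFieldType) (n : nat) (W : 'M[R]_n) (E : {set 'I_n})
  : {set 'I_n} -> Prop :=
  fun S => exists (b x : 'cV[R]_n),
    (forall i, 0 <= b i 0) /\ (forall i, 0 <= x i 0) /\
    tln_fixed_point W b x /\ supp_plus E x = S.

Definition drop_EI (R : realFieldType) (n : nat) (W : 'M[R]_n) (E : {set 'I_n}) : 'M[R]_n :=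
  \matrix_(i, j) (if (i \notin E) && (j \in E) then 0 else W i j).

From mathcomp Require Import all_boot all_order all_algebra.
From mathcomp Require Import lra.
Import Order.TTheory GRing.Theory Num.Theory.
Local Open Scope ring_scope.

(* Write W = W' + D, where W' = drop_EI W E and D is the E -> I block of W:
   D has nonzero entries only in inhibitory rows and excitatory columns, and
   these are >= 0.  For a nonnegative state x, D x is therefore a nonnegative
   vector supported on inhibitory neurons, and W (D x) <= 0 because inhibitory
   columns of W are <= 0.

   - C(W) in C(W'): a fixed point x of (W, b) is a fixed point of (W', b + D x),
     since both networks receive the same input W x + b = W' x + (b + D x).
   - C(W') in C(W): from a fixed point x of (W', b), raise the inhibitory
     activities to z = x + D x.  On excitatory neurons, the bias b - W (D x)
     reproduces the input W' x + b; on inhibitory neurons, the bias z - W z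
     makes z itself the input.  Both biases are >= 0 by the sign facts above,
     and z agrees with x on E, so the excitatory support is unchanged. *)

Lemma relu_id {R : realFieldType} (y : R) : 0 <= y -> relu y = y.
Proof. by move=> y_ge0; rewrite /relu max_r. Qed.

Lemma tln_fixed_point_input {R : realFieldType} {n : nat} {W1 W2 : 'M[R]_n}
    {b1 b2 x : 'cV[R]_n} :
  (forall i, (W1 *m x) i 0 + b1 i 0 = (W2 *m x) i 0 + b2 i 0) ->
  tln_fixed_point W1 b1 x -> tln_fixed_point W2 b2 x.
Proof. by move=> same_input fp1 i; rewrite fp1 same_input. Qed.

Lemma supp_plus_eq {R : realFieldType} {n : nat} {E : {set 'I_n}} {x z : 'cV[R]_n} :
  (forall i, i \in E -> z i 0 = x i 0) -> supp_plus E z = supp_plus E x.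
Proof.
move=> agree; apply/setP => i; rewrite !inE.
by case: (boolP (i \in E)) => //= iE; rewrite agree.
Qed.

Section DropExcitatoryToInhibitory.

Variables (R : realFieldType) (n : nat) (W : 'M[R]_n) (E : {set 'I_n}).
Hypothesis dale_W : dale W E.

Let W' := drop_EI W E.

(* The block of W formed by the synapses from excitatory to inhibitory neurons. *)
Let D := W - W'.

Lemma exc_col_ge0 i j : j \in E -> 0 <= W i j.
Proof. by case: dale_W => _ [exc _]; apply: exc. Qed.

Lemma inh_col_le0 i j : j \notin E -> W i j <= 0.
Proof. by case: dale_W => _ [_ inh]; apply: inh. Qed.

Lemma DE i j : D i j = if (i \notin E) && (j \in E) then W i j else 0.
Proof. by rewrite /D !mxE; case: ifP => _; rewrite ?subr0 ?subrr. Qed.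

Lemma W_split (x : 'cV[R]_n) i : (W *m x) i 0 = (W' *m x) i 0 + (D *m x) i 0.
Proof. by rewrite -[in LHS](subrK W' W) mulmxDl mxE addrC. Qed.

Lemma D_mul_ge0 (x : 'cV[R]_n) : (forall j, 0 <= x j 0) -> forall i, 0 <= (D *m x) i 0.
Proof.
move=> x_ge0 i; rewrite mxE; apply: sumr_ge0 => j _; rewrite DE.
by case: ifP => [/andP[_ jE]|_]; rewrite ?mul0r // mulr_ge0 ?exc_col_ge0.
Qed.

Lemma D_mul_exc (x : 'cV[R]_n) i : i \in E -> (D *m x) i 0 = 0.
Proof. by move=> iE; rewrite mxE big1 // => j _; rewrite DE iE /= mul0r. Qed.

Lemma W_mul_inh_le0 (y : 'cV[R]_n) :
  (forall j, 0 <= y j 0) -> (forall j, j \in E -> y j 0 = 0) ->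
  forall i, (W *m y) i 0 <= 0.
Proof.
move=> y_ge0 y_exc i; rewrite -oppr_ge0 mxE -sumrN; apply: sumr_ge0 => j _.
case: (boolP (j \in E)) => jE; first by rewrite y_exc // mulr0 oppr0.
by rewrite -mulNr mulr_ge0 // oppr_ge0 inh_col_le0.
Qed.

Lemma W'_mul_inh_le0 (x : 'cV[R]_n) : (forall j, 0 <= x j 0) ->
  forall i, i \notin E -> (W' *m x) i 0 <= 0.
Proof.
move=> x_ge0 i iE; rewrite -oppr_ge0 mxE -sumrN; apply: sumr_ge0 => j _.
rewrite mxE iE /=; case: ifP => jE; first by rewrite mul0r oppr0.
by rewrite -mulNr mulr_ge0 // oppr_ge0 inh_col_le0 ?jE.
Qed.

Lemma W'_mul_exc (x : 'cV[R]_n) i : i \in E -> (W' *m x) i 0 = (W *m x) i 0.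
Proof. by move=> iE; rewrite !mxE; apply: eq_bigr => j _; rewrite mxE iE. Qed.

(* C(W) in C(W'): absorb the input D x into the bias. *)
Lemma code_W_sub_code_W' S : comb_code W E S -> comb_code W' E S.
Proof.
move=> [b [x [b_ge0 [x_ge0 [fp suppS]]]]].
exists (b + D *m x), x; split.
  by move=> i; rewrite mxE addr_ge0 // D_mul_ge0.
split=> //; split=> //; apply: tln_fixed_point_input fp => i.
by rewrite W_split [(b + _) i 0]mxE; lra.
Qed.

(* C(W') in C(W): lift the inhibitory activities to z = x + D x and
   choose the bias neuron by neuron so that z is a fixed point of W. *)
Lemma code_W'_sub_code_W S : comb_code W' E S -> comb_code W E S.
Proof.
move=> [b [x [b_ge0 [x_ge0 [fp suppS]]]]].
pose d := D *m x; pose z := x + d.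
have d_ge0 : forall i, 0 <= d i 0 := D_mul_ge0 x x_ge0.
have Wd_le0 : forall i, (W *m d) i 0 <= 0.
  by apply: W_mul_inh_le0 => // j; apply: D_mul_exc.
have z_ge0 : forall i, 0 <= z i 0 by move=> i; rewrite mxE addr_ge0.
have z_exc : forall i, i \in E -> z i 0 = x i 0.
  by move=> i iE; rewrite mxE D_mul_exc // addr0.
have Wz : forall i, (W *m z) i 0 = (W' *m x) i 0 + d i 0 + (W *m d) i 0.
  by move=> i; rewrite mulmxDr mxE -W_split.
pose b' := \col_i (if i \in E then b i 0 - (W *m d) i 0 else z i 0 - (W *m z) i 0).
exists b', z; split.
  move=> i; rewrite mxE; case: ifP => iE.
    by have := b_ge0 i; have := Wd_le0 i; lra.
  have := x_ge0 i; have := Wd_le0 i; have := W'_mul_inh_le0 x x_ge0 i (negbT iE).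
  by rewrite Wz [z i 0]mxE; lra.
split=> //; split; last by rewrite (supp_plus_eq z_exc).
move=> i; rewrite [b' i 0]mxE; case: ifP => iE.
  by rewrite z_exc // fp Wz /d D_mul_exc //; congr relu; lra.
by rewrite addrCA subrr addr0 relu_id.
Qed.

End DropExcitatoryToInhibitory.

Theorem mainTheorem2 (R : realFieldType) (n : nat) (W : 'M[R]_n) (E : {set 'I_n}) :
  dale W E -> ground_assumption W ->
  forall S : {set 'I_n}, comb_code W E S <-> comb_code (drop_EI W E) E S.
Proof.
move=> dale_W _ S; split.
- exact: code_W_sub_code_W'.
- exact: code_W'_sub_code_W.
Qed.
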